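(* Let $X$ be a finite set with $|X|\ge2$ and $f:2^X\to\mathbb{R}_{\ge0}$ a normalized monotone submodular function possessing supermodularity of conditioning, with $f(x)>0$ for all $x\in X$. Then for all $S\subseteq X$ and $x\in X\setminus S$, \[ f(x\mid S)\ \ge\ \underline f(x\mid S)\ \ge\ f(x)\big(1-|S|\,\tau_2\big), \qquad\text{and hence}\qquad f(x\mid S)\ \ge\ f(x)\big(1-\min\{|S|\tau_2,1\}\big). \]
   Context: $f(x\mid A):=f(A\cup\{x\})-f(A)$, $f(x):=f(\{x\})$, $f(x\mid y):=f(x\mid\{y\})$. Pairwise lower estimate: $\underline f(x\mid S):=f(x)-\sum_{y\in S}(f(x)-f(x\mid y))$. The 2-cardinality curvature is $\tau_2:=1-\min_{x\in X,\ y\in X\setminus\{x\}} f(x\mid y)/f(x)$. Supermodularity of conditioning: for all $S\subseteq X$, $A\subseteq B\subseteq X$ and $C\subseteq X\setminus B$, $f(S\mid A)-f(S\mid A\cup C)\ge f(S\mid B)-f(S\mid B\cup C)$, where $f(T\mid A):=f(A\cup T)-f(A)$. *)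

From mathcomp Require Import all_boot all_order all_algebra.
Set Implicit Arguments. Unset Strict Implicit. Unset Printing Implicit Defensive.
Import Order.TTheory GRing.Theory Num.Theory.
Local Open Scope ring_scope.

Section Defs.
Variables (X : finType) (R : realFieldType) (f : {set X} -> R).

Definition condS (T A : {set X}) : R := f (A :|: T) - f A.
Definition cond (x : X) (A : {set X}) : R := f (x |: A) - f A.
Definition fx (x : X) : R := f [set x].
Definition cond1 (x y : X) : R := cond x [set y].

Definition normalized := f set0 = 0.
Definition nonneg := forall A, 0 <= f A.
Definition monotone := forall A B : {set X}, A \subset B -> f A <= f B.
Definition submodular := forall A B : {set X}, f (A :|: B) + f (A :&: B) <= f A + f B.
Definition supermod_conditioning :=
  forall S A B C : {set X}, A \subset B -> [disjoint C & B] ->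
    condS S A - condS S (A :|: C) >= condS S B - condS S (B :|: C).

Definition lower_est (x : X) (S : {set X}) : R :=
  fx x - \sum_(y in S) (fx x - cond1 x y).

(* The min is over the (nonempty when #|X| >= 2) set of ordered pairs (x,y), x != y;
   it is seeded with the ratio of one such pair (1 if there is none). *)
Definition ratio (p : X * X) : R := cond1 p.1 p.2 / fx p.1.
Definition min_ratio : R :=
  let seed := if [pick p : X * X | p.1 != p.2] is Some p0 then ratio p0 else 1 in
  \big[Num.min/seed]_(p : X * X | p.1 != p.2) ratio p.
Definition tau2 : R := 1 - min_ratio.
End Defs.

(** Supermodularity of conditioning, applied with [A = set0], [B = S] and
    [C = {y}], says that adding [y] to the conditioning set costs the marginal
    gain of [x] at most [f(x) - f(x | y)].  Adding the elements of [S] one at a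
    time gives [f(x | S) >= f_(x | S)], and each of the [|S|] losses is at most
    [tau2 f(x)] by the definition of the curvature. *)

From Pilot Require Import Defs.
From mathcomp Require Import all_boot all_order all_algebra.
From mathcomp Require Import lra.
Set Implicit Arguments. Unset Strict Implicit. Unset Printing Implicit Defensive.
Import Order.TTheory GRing.Theory Num.Theory.
Local Open Scope ring_scope.

Section PairwiseEstimate.
Variables (X : finType) (R : realFieldType) (f : {set X} -> R).

Lemma condS_set1 (x : X) (A : {set X}) : condS f [set x] A = cond f x A.
Proof. by rewrite /condS /cond setUC. Qed.

Lemma cond_set0 (x : X) : normalized f -> cond f x set0 = fx f x.
Proof. by move=> f0; rewrite /cond setU0 f0 subr0. Qed.

Lemma cond_ge0 (x : X) (A : {set X}) : monotone f -> 0 <= cond f x A.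
Proof. by move=> fmono; rewrite subr_ge0 fmono // subsetUr. Qed.

Lemma min_ratio_le (x y : X) :
  x != y -> min_ratio f <= Defs.ratio f (x, y).
Proof. by move=> xy; apply: (ge_bigmin_seq _ (x, y)); rewrite ?mem_index_enum. Qed.

Lemma fx_sub_cond1_le_tau2 (x y : X) :
  0 < fx f x -> x != y -> fx f x - cond1 f x y <= fx f x * tau2 f.
Proof.
move=> fx_gt0 xy; have := min_ratio_le xy.
rewrite /Defs.ratio /= ler_pdivlMr // /tau2 mulrBr mulr1 mulrC; lra.
Qed.

Lemma lower_est_ge_curvature (S : {set X}) (x : X) :
  0 < fx f x -> x \notin S -> fx f x * (1 - #|S|%:R * tau2 f) <= lower_est f x S.
Proof.
move=> fx_gt0 xNS.
have : \sum_(y in S) (fx f x - cond1 f x y) <= \sum_(y in S) fx f x * tau2 f.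
  apply: ler_sum => y yS; apply: fx_sub_cond1_le_tau2 => //.
  by apply: contraNneq xNS => ->.
rewrite sumr_const -mulrnAr -mulr_natl mulrCA /lower_est; lra.
Qed.

Hypotheses (f0 : normalized f) (fSC : supermod_conditioning f).

Lemma cond_setU1_ge (x y : X) (S : {set X}) : y \notin S ->
  cond f x S - (fx f x - cond1 f x y) <= cond f x (y |: S).
Proof.
move=> yNS; have yS_disj : [disjoint [set y] & S] by rewrite disjoints1.
have := fSC [set x] (sub0set S) yS_disj.
by rewrite !condS_set1 set0U cond_set0 // [S :|: _]setUC /cond1; lra.
Qed.

Lemma lower_est_le_cond (x : X) (S : {set X}) : lower_est f x S <= cond f x S.
Proof.
elim: {S}_.+1 {-2}S (ltnSn #|S|) => // n IH S ltSn.
have [->|[y yS]] := set_0Vmem S.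
  by rewrite /lower_est big_set0 subr0 cond_set0.
have yNSy : y \notin S :\ y by rewrite setD11.
have ltSyn : (#|S :\ y| < n)%N.
  by move: ltSn; rewrite (cardsD1 y S) yS ltnS.
rewrite -(setD1K yS) /lower_est big_setU1 //=.
have := IH _ ltSyn; have := cond_setU1_ge x yNSy.
by rewrite /lower_est; lra.
Qed.

End PairwiseEstimate.

Theorem mainTheorem7 (X : finType) (R : realFieldType) (f : {set X} -> R) :
  (2 <= #|X|)%N ->
  nonneg f -> normalized f -> monotone f -> submodular f ->
  supermod_conditioning f ->
  (forall x : X, 0 < fx f x) ->
  forall (S : {set X}) (x : X), x \notin S ->
    [/\ cond f x S >= lower_est f x S,
        lower_est f x S >= fx f x * (1 - #|S|%:R * tau2 f)
      & cond f x S >= fx f x * (1 - Num.min (#|S|%:R * tau2 f) 1)].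
Proof.
move=> _ _ f0 fmono _ fSC fx_gt0 S x xNS.
have lowerE := lower_est_le_cond f0 fSC x S.
have curvE := lower_est_ge_curvature (fx_gt0 x) xNS.
split => //; case: (leP (#|S|%:R * tau2 f) 1) => _.
- exact: le_trans curvE lowerE.
- by rewrite subrr mulr0 cond_ge0.
Qed.
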